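(* Let $G=(V,E,L)$ be a hypergraph with loops, $L=L^-\cup L^+$, and let $G'=(V,E,L^+)$ be obtained by removing all minus loops. Then $$\mathrm{PP}(G)=\Big\{z\in\mathbb{R}^{V\cup E\cup L}: (z_p)_{p\in V\cup E\cup L^+}\in\mathrm{PP}(G'),\ z_{ii}\le z_i,\ z_i\in[0,1]\ \forall\{i,i\}\in L^-\Big\}.$$
   Context: A hypergraph with loops is $G=(V,E,L)$: $V$ a finite node set, $E$ a set of subsets of $V$ of cardinality at least two, $L$ a set of loops $\{i,i\}$, $i\in V$, partitioned as $L=L^-\cup L^+$ (minus/plus loops). $\mathrm{PP}(G):=\mathrm{conv}\{z\in\mathbb{R}^{V\cup E\cup L}: z_{ii}\ge z_i^2\ \forall\{i,i\}\in L^+,\ z_{ii}\le z_i^2\ \forall \{i,i\}\in L^-,\ z_e=\prod_{i\in e}z_i\ \forall e\in E,\ z_i\in[0,1]\ \forall i\in V\}$. *)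

From HB Require Import structures.
From mathcomp Require Import all_boot all_order all_algebra.
From mathcomp Require Export reals.
Set Implicit Arguments. Unset Strict Implicit. Unset Printing Implicit Defensive.
Import Order.TTheory GRing.Theory Num.Theory.
Local Open Scope ring_scope.

(* A hypergraph with loops G = (V,E,L): V a finite node type, E a set of
   subsets of V (each of cardinality >= 2, imposed as a hypothesis), and the
   loops {i,i} in L are identified with the nodes i in a set L : {set V}.
   The coordinates of R^{V ∪ E ∪ L}: one per node, one per edge e ∈ E and
   one per loop {i,i} ∈ L. *)
Inductive hcoord (V : finType) (E : {set {set V}}) (L : {set V}) : Type :=
| CNode (i : V)
| CEdge (e : {set V}) (he : e \in E)
| CLoop (i : V) (hi : i \in L).

Arguments CNode {V E L} i.
Arguments CEdge {V E L} e he.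
Arguments CLoop {V E L} i hi.

Definition conv (R : realType) (T : Type) (S : (T -> R) -> Prop) : (T -> R) -> Prop :=
  fun z => exists (n : nat) (lam : 'I_n -> R) (p : 'I_n -> T -> R),
    [/\ (forall k, 0 <= lam k), \sum_(k < n) lam k = 1,
        (forall k, S (p k)) & (forall t, z t = \sum_(k < n) lam k * p k t)].

Lemma inLm (V : finType) (Lm Lp : {set V}) (i : V) : i \in Lm -> i \in Lm :|: Lp.
Proof. by move=> h; rewrite inE h. Qed.

Lemma inLp (V : finType) (Lm Lp : {set V}) (i : V) : i \in Lp -> i \in Lm :|: Lp.
Proof. by move=> h; rewrite inE h orbT. Qed.

Lemma inLp0 (V : finType) (Lp : {set V}) (i : V) : i \in set0 :|: Lp -> i \in Lp.
Proof. by rewrite set0U. Qed.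

Definition PPpoints (R : realType) (V : finType) (E : {set {set V}}) (Lm Lp : {set V})
  (z : hcoord E (Lm :|: Lp) -> R) : Prop :=
  [/\ (forall i (h : i \in Lp), z (CLoop i (inLp Lm h)) >= z (CNode i) ^+ 2),
      (forall i (h : i \in Lm), z (CLoop i (inLm Lp h)) <= z (CNode i) ^+ 2),
      (forall e (h : e \in E), z (CEdge e h) = \prod_(i in e) z (CNode i)) &
      (forall i, 0 <= z (CNode i) <= 1)].

Definition PP (R : realType) (V : finType) (E : {set {set V}}) (Lm Lp : {set V}) :
  (hcoord E (Lm :|: Lp) -> R) -> Prop :=
  conv (@PPpoints R V E Lm Lp).

(* Projection (z_p)_{p ∈ V ∪ E ∪ L^+} of z ∈ R^{V ∪ E ∪ L}; the coordinate
   space of G' = (V, E, L^+) is hcoord E (set0 :|: Lp) (no minus loops). *)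
Definition dropminus (R : realType) (V : finType) (E : {set {set V}}) (Lm Lp : {set V})
  (z : hcoord E (Lm :|: Lp) -> R) : hcoord E (set0 :|: Lp) -> R :=
  fun c => match c with
  | CNode i => z (CNode i)
  | CEdge e h => z (CEdge e h)
  | CLoop i h => z (CLoop i (inLp Lm (inLp0 h)))
  end.

From mathcomp Require Import all_boot all_order all_algebra.
From mathcomp Require Import reals.
From mathcomp Require Import ring lra.
Set Implicit Arguments.
Unset Strict Implicit.
Unset Printing Implicit Defensive.
Import Order.TTheory GRing.Theory Num.Theory.
Local Open Scope ring_scope.

(* The inclusion from left to right is coordinatewise: dropping the minus-loop
   coordinates maps the points of G to points of G', and z_ii <= z_i^2 <= z_i
   on [0, 1].  Conversely, it suffices to show that a point of G' extended by
   minus-loop values z_ii <= z_i lies in PP(G), because the convex hull of a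
   convex hull is the hull itself.  Such a point is the mean of a random point
   of G: round each node with a minus loop independently to 1 with probability
   z_i and to 0 otherwise, and lower its loop coordinate by the slack
   z_i - z_ii.  Independence preserves the mean of every edge monomial, and on
   {0, 1} the minus-loop constraint reads z_ii <= z_i. *)

Section ConvexHull.
Variables (R : realType) (T : Type).
Implicit Types (S : (T -> R) -> Prop) (z : T -> R).

Lemma conv_fin S z (I : finType) (lam : I -> R) (p : I -> T -> R) :
  (forall i, 0 <= lam i) -> \sum_i lam i = 1 -> (forall i, S (p i)) ->
  (forall t, z t = \sum_i lam i * p i t) -> conv S z.
Proof.
move=> lam_ge0 lam_sum1 Sp zE.
exists #|I|, (lam \o enum_val), (p \o enum_val); split => //=.
- by rewrite -lam_sum1 (big_enum_val (A := I)).
- by move=> t; rewrite zE (big_enum_val (A := I)).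
Qed.

Lemma conv_conv S z : conv (conv S) z -> conv S z.
Proof.
case=> n [lam [p [lam_ge0 lam_sum1 convSp zE]]].
pose mix := {m : nat & (('I_m -> R) * ('I_m -> T -> R))%type}.
have /fin_all_exists[r rP] : forall k, exists r : mix,
    [/\ forall j, 0 <= (tagged r).1 j, \sum_j (tagged r).1 j = 1,
        forall j, S ((tagged r).2 j)
      & forall t, p k t = \sum_j (tagged r).1 j * (tagged r).2 j t].
  by move=> k; have [m [mu [q []]]] := convSp k; exists (existT _ m (mu, q)).
pose mu k := (tagged (r k)).1; pose q k := (tagged (r k)).2.
apply: (@conv_fin S z {k : 'I_n & 'I_(tag (r k))}
  (fun x => lam (tag x) * mu (tag x) (tagged x)) (fun x => q (tag x) (tagged x))).
- by move=> [k j] /=; have [mu_ge0 _ _ _] := rP k; rewrite mulr_ge0 ?mu_ge0.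
- rewrite -(sig_big_dep xpredT (fun _ => xpredT) (fun k j => lam k * mu k j)) /=.
  rewrite -lam_sum1; apply: eq_bigr => k _; case: (rP k) => _ mu_sum1 _ _.
  by rewrite -mulr_sumr [X in _ * X]mu_sum1 mulr1.
- by move=> [k j]; have [_ _ Sq _] := rP k; apply: Sq.
- move=> t; rewrite zE.
  rewrite -(sig_big_dep xpredT (fun _ => xpredT) (fun k j => lam k * mu k j * q k j t)) /=.
  apply: eq_bigr => k _; case: (rP k) => _ _ _ ->.
  by rewrite mulr_sumr; apply: eq_bigr => j _; rewrite mulrA.
Qed.

Lemma conv_coord_le S z t1 t2 :
  (forall p, S p -> p t1 <= p t2) -> conv S z -> z t1 <= z t2.
Proof.
move=> Sle [n [lam [p [lam_ge0 _ Sp zE]]]]; rewrite !zE.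
by apply: ler_sum => k _; rewrite ler_wpM2l ?Sle.
Qed.

Lemma conv_coord_itv S z t a b :
  (forall p, S p -> a <= p t <= b) -> conv S z -> a <= z t <= b.
Proof.
move=> Sab [n [lam [p [lam_ge0 lam_sum1 Sp zE]]]].
have const c : c = \sum_k lam k * c by rewrite -mulr_suml lam_sum1 mul1r.
rewrite zE (const a) (const b); apply/andP; split.
  by apply: ler_sum => k _; rewrite ler_wpM2l //; case/andP: (Sab _ (Sp k)).
by apply: ler_sum => k _; rewrite ler_wpM2l //; case/andP: (Sab _ (Sp k)).
Qed.

Lemma conv_precomp (T' : Type) S (S' : (T' -> R) -> Prop)
    (g : (T -> R) -> T' -> R) (pi : T' -> T) z :
  (forall p t', g p t' = p (pi t')) -> (forall p, S p -> S' (g p)) ->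
  conv S z -> conv S' (g z).
Proof.
move=> gE SS' [n [lam [p [lam_ge0 lam_sum1 Sp zE]]]].
exists n, lam, (g \o p); split=> //= [k|t']; first exact: SS'.
by rewrite !gE zE; apply: eq_bigr => k _; rewrite gE.
Qed.
End ConvexHull.

Section Rounding.
Variables (R : comPzRingType) (V : finType) (S : {set V}) (x : V -> R).

Definition round_prob (j : V) (b : bool) : R :=
  if j \in S then (if b then x j else 1 - x j) else (~~ b)%:R.

Definition round_val (j : V) (b : bool) : R := if j \in S then b%:R else x j.

Definition round_weight (f : {ffun V -> bool}) : R := \prod_j round_prob j (f j).

Lemma sum_round_weight_prod (A : {set V}) :
  \sum_f round_weight f * \prod_(j in A) round_val j (f j) = \prod_(j in A) x j.
Proof.
pose F j b := round_prob j b * (if j \in A then round_val j b else 1).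
transitivity (\sum_(f : {ffun V -> bool}) \prod_j F j (f j)).
  by apply: eq_bigr => f _; rewrite big_split /= -big_mkcond.
rewrite -bigA_distr_bigA.
rewrite [RHS]big_mkcond; apply: eq_bigr => j _; rewrite big_bool /F /round_prob /round_val.
by case: (j \in S); case: (j \in A) => /=; ring.
Qed.

Lemma sum_round_weight : \sum_f round_weight f = 1.
Proof.
rewrite -[RHS](big_set0 1 *%R x) -sum_round_weight_prod.
by apply: eq_bigr => f _; rewrite big_set0 mulr1.
Qed.

Lemma sum_round_weight_val i : \sum_f round_weight f * round_val i (f i) = x i.
Proof.
rewrite -[RHS](big_set1 *%R i x) -sum_round_weight_prod.
by apply: eq_bigr => f _; rewrite big_set1.
Qed.
End Rounding.

Arguments round_val {R V} S x j b.
Arguments round_weight {R V} S x f.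

Lemma round_weight_ge0 (R : numDomainType) (V : finType) (S : {set V}) (x : V -> R) f :
  (forall j, j \in S -> 0 <= x j <= 1) -> 0 <= round_weight S x f.
Proof.
move=> x01; apply: prodr_ge0 => j _; rewrite /round_prob.
case: ifP => [/x01/andP[x0 x1] | _]; last by case: (f j).
by case: (f j); rewrite ?subr_ge0.
Qed.

Section Hypergraph.
Variables (R : realType) (V : finType) (E : {set {set V}}).

Definition loop_coord {L : {set V}} (f : hcoord E L -> R) (i : V) : R :=
  match @idP (i \in L) with ReflectT h => f (CLoop i h) | ReflectF _ => 0 end.

Lemma loop_coordE {L : {set V}} (f : hcoord E L -> R) i (h : i \in L) :
  loop_coord f i = f (CLoop i h).
Proof.
rewrite /loop_coord; destruct (@idP (i \in L)) as [h' | h']; last by case: h'.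
by rewrite (bool_irrelevance h' h).
Qed.

Variables (Lm Lp : {set V}).
Hypothesis Lm_Lp_disjoint : [disjoint Lm & Lp].

Definition plus_coord (t : hcoord E (set0 :|: Lp)) : hcoord E (Lm :|: Lp) :=
  match t with
  | CNode i => CNode i
  | CEdge e h => CEdge e h
  | CLoop i h => CLoop i (inLp Lm (inLp0 h))
  end.

Lemma dropminusE (z : hcoord E (Lm :|: Lp) -> R) t :
  dropminus z t = z (plus_coord t).
Proof. by case: t. Qed.

Lemma PPpoints_dropminus (p : hcoord E (Lm :|: Lp) -> R) :
  PPpoints p -> PPpoints (dropminus p).
Proof.
by case=> p_plus _ p_edge p_node; split=> //= i h; case: (elimF idP (in_set0 i) h).
Qed.

Lemma PPpoints_minus_loop_le (p : hcoord E (Lm :|: Lp) -> R) i (h : i \in Lm) :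
  PPpoints p -> p (CLoop i (inLm Lp h)) <= p (CNode i).
Proof.
case=> _ p_minus _ p_node; apply: le_trans (p_minus i h) _.
by have /andP[p0 p1] := p_node i; rewrite expr2 ler_piMr.
Qed.

Definition minus_relaxed (z : hcoord E (Lm :|: Lp) -> R) : Prop :=
  [/\ (forall i (h : i \in Lp), z (CLoop i (inLp Lm h)) >= z (CNode i) ^+ 2),
      (forall i (h : i \in Lm), z (CLoop i (inLm Lp h)) <= z (CNode i)),
      (forall e (h : e \in E), z (CEdge e h) = \prod_(i in e) z (CNode i)) &
      (forall i, 0 <= z (CNode i) <= 1)].

Definition minus_gap (z : hcoord E (Lm :|: Lp) -> R) (i : V) : R :=
  z (CNode i) - loop_coord z i.

Definition round_point (z : hcoord E (Lm :|: Lp) -> R) (f : {ffun V -> bool}) :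
    hcoord E (Lm :|: Lp) -> R :=
  let y j := round_val Lm (fun i => z (CNode i)) j (f j) in
  fun t => match t with
  | CNode i => y i
  | CEdge e _ => \prod_(j in e) y j
  | CLoop i h => if i \in Lm then y i - minus_gap z i else z (CLoop i h)
  end.

Lemma round_point_PPpoints z f : minus_relaxed z -> PPpoints (round_point z f).
Proof.
case=> z_plus z_minus _ z_node; rewrite /round_point /round_val.
split=> //= [i h | i h | i].
- by rewrite !(disjointFl Lm_Lp_disjoint h); apply: z_plus.
- have gap_ge0 : 0 <= minus_gap z i by rewrite subr_ge0 (loop_coordE _ (inLm Lp h)).
  by rewrite !h; case: (f i) => /=; lra.
- by case: (i \in Lm); [case: (f i) => /=; rewrite ?ler01 ?lexx | apply: z_node].
Qed.

Lemma mean_round_point z t : minus_relaxed z ->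
  \sum_f round_weight Lm (fun i => z (CNode i)) f * round_point z f t = z t.
Proof.
case=> _ _ z_edge _; case: t => [i | e h | i h] /=.
- exact: sum_round_weight_val.
- by rewrite sum_round_weight_prod z_edge.
case: (i \in Lm); last by rewrite -mulr_suml sum_round_weight mul1r.
under eq_bigr => f _ do rewrite mulrBr.
rewrite sumrB sum_round_weight_val -mulr_suml sum_round_weight mul1r.
by rewrite /minus_gap (loop_coordE _ h) opprB addrC subrK.
Qed.

Lemma minus_relaxed_PP z : minus_relaxed z -> PP z.
Proof.
move=> zR; have [_ _ _ z_node] := zR.
apply: (@conv_fin _ _ _ z _ (round_weight Lm (fun i => z (CNode i))) (round_point z)).
- by move=> f; apply: round_weight_ge0.
- exact: sum_round_weight.
- by move=> f; apply: round_point_PPpoints.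
- by move=> t; rewrite mean_round_point.
Qed.

Definition lift_minus (p : hcoord E (set0 :|: Lp) -> R) (m : V -> R) :
    hcoord E (Lm :|: Lp) -> R :=
  fun t => match t with
  | CNode i => p (CNode i)
  | CEdge e h => p (CEdge e h)
  | CLoop i _ => if i \in Lm then m i else loop_coord p i
  end.

Lemma lift_minus_relaxed p m : PPpoints p ->
  (forall i, i \in Lm -> m i <= p (CNode i)) -> minus_relaxed (lift_minus p m).
Proof.
case=> p_plus _ p_edge p_node m_le; split=> //= i h.
- by rewrite (disjointFl Lm_Lp_disjoint h) (loop_coordE _ (inLp set0 h)).
- by rewrite h; apply: m_le.
Qed.

Lemma lift_minus_mean z n (lam : 'I_n -> R) p : \sum_k lam k = 1 ->
    (forall t, dropminus z t = \sum_k lam k * p k t) ->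
  forall t, z t = \sum_k lam k * lift_minus (p k) (fun i => p k (CNode i) - minus_gap z i) t.
Proof.
move=> lam_sum1 zE [i | e h | i h] /=; [exact: zE (CNode i) | exact: zE (CEdge e h) |].
case hm: (i \in Lm).
  under eq_bigr => k _ do rewrite mulrBr.
  rewrite sumrB -mulr_suml lam_sum1 mul1r -(zE (CNode i)) /minus_gap (loop_coordE _ h) /=.
  by rewrite opprB addrC subrK.
have hp : i \in set0 :|: Lp by move: h; rewrite !inE hm.
under eq_bigr => k _ do rewrite (loop_coordE _ hp).
by rewrite -zE /= (bool_irrelevance (inLp Lm (inLp0 hp)) h).
Qed.

End Hypergraph.

Theorem lemma4 (R : realType) (V : finType) (E : {set {set V}}) (Lm Lp : {set V})
  (hE : forall e, e \in E -> (1 < #|e|)%N)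
  (hdisj : [disjoint Lm & Lp])
  (z : hcoord E (Lm :|: Lp) -> R) :
  PP z <->
  (PP (dropminus z) /\
   (forall i (h : i \in Lm),
       z (CLoop i (inLm Lp h)) <= z (CNode i) /\ 0 <= z (CNode i) <= 1)).
Proof.
split=> [PPz | [[n [lam [p [lam_ge0 lam_sum1 Pp zE]]]] z_minus]].
  split; first exact: conv_precomp (@dropminusE _ _ _ _ _) (@PPpoints_dropminus _ _ _ _ _) PPz.
  move=> i h; split; first by apply: conv_coord_le PPz => p; apply: PPpoints_minus_loop_le.
  by apply: conv_coord_itv PPz => p [].
apply: conv_conv.
exists n, lam, (fun k => lift_minus (p k) (fun i => p k (CNode i) - minus_gap z i)).
split=> // [k|]; last exact: lift_minus_mean.
apply/(minus_relaxed_PP hdisj)/(lift_minus_relaxed hdisj) => // i hi.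
by rewrite gerBl /minus_gap (loop_coordE _ (inLm Lp hi)) subr_ge0; case: (z_minus i hi).
Qed.
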